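(* Let $\mathcal{D}=\{(X_i,B_i):i\in I\}$ be a collection of pairs, each consisting of a random variable $X_i$ on $\Omega$ and a nonempty event $B_i\subseteq\Omega$, equipped with coherent$_1$ conditional previsions $\{P(X_i\mid B_i):i\in I\}$, and suppose $\mathcal{D}$ contains every pair $(c,\Omega)$ with $c$ a real number (the constant random variable $c$). Let $\mathcal{F}$ be any set of random variable/nonempty event pairs with $\mathcal{D}\subseteq\mathcal{F}$. Then there exists an assignment of extended-real conditional previsions $P'(X\mid B)$ for all $(X,B)\in\mathcal{F}$ that agrees with $P$ on $\mathcal{D}$ and is coherent$_1$.
   Context: Let $\Omega$ be a nonempty set of states $\omega$; events are subsets of $\Omega$ and random variables are real-valued functions on $\Omega$. An event $B$ is identified with its indicator function. A conditional prevision $P(X\mid B)$ is an extended real number; $P(X\mid\Omega)$ is called a marginal prevision. Coherence$_1$: a collection $\{P(X_i\mid B_i):i\in I\}$ is coherent$_1$ if for every finite $\{i_1,\dots,i_n\}\subseteq I$, all real $\alpha_1,\dots,\alpha_n$ with $\alpha_j\ge 0$ whenever $P(X_{i_j}\mid B_{i_j})=+\infty$ and $\alpha_j\le 0$ whenever $P(X_{i_j}\mid B_{i_j})=-\infty$, and all real $c_1,\dots,c_n$ with $c_j=P(X_{i_j}\mid B_{i_j})$ whenever that prevision is finite, we have $\sup_\omega \sum_{j=1}^n \alpha_j B_{i_j}(\omega)[X_{i_j}(\omega)-c_j]\ge 0$. *)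

From mathcomp Require Import all_boot all_order all_algebra.
From mathcomp Require Import all_classical all_reals.
From mathcomp Require Import ereal numfun.
Set Implicit Arguments. Unset Strict Implicit. Unset Printing Implicit Defensive.
Import Order.TTheory GRing.Theory Num.Theory.
Local Open Scope classical_set_scope.
Local Open Scope ring_scope.

Definition rvpair (R : realType) (Omega : Type) := ((Omega -> R) * set Omega)%type.

Definition admissible_term (R : realType) (v : \bar R) (alpha c : R) : Prop :=
  match v with
  | +oo%E => 0 <= alpha
  | -oo%E => alpha <= 0
  | r%:E => c = r
  end.

(* A finite gamble is a list of triples ((X_j, B_j), alpha_j, c_j); its value at w is
   sum_j alpha_j * B_j(w) * (X_j(w) - c_j), with B_j identified with its indicator. *)
Definition gamble (R : realType) (Omega : Type)
    (s : seq (rvpair R Omega * R * R)) (w : Omega) : R :=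
  \sum_(t <- s) t.1.2 * \1_(t.1.1.2) w * (t.1.1.1 w - t.2).

Definition coherent1 (R : realType) (Omega : Type)
    (S : set (rvpair R Omega)) (P : rvpair R Omega -> \bar R) : Prop :=
  forall s : seq (rvpair R Omega * R * R),
    (forall t, t \in s -> S t.1.1 /\ admissible_term (P t.1.1) t.1.2 t.2) ->
    (0 <= ereal_sup (range (fun w => (gamble s w)%:E)))%E.

(* A coherent
   assessment can always be extended to one more pair: adding B(X - r) keeps coherence for
   all r below some threshold t and adding B(r - X) for all r above t, and value t (or +oo,
   -oo when the threshold degenerates) works.  Coherence of a chain is witnessed on finite
   sublists, so Zorn's lemma yields a coherent assessment containing P on D and covering
   every pair; reading off one value per pair gives the extension. *)
From mathcomp Require Import all_boot all_order all_algebra.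
From mathcomp Require Import all_classical all_reals.
From mathcomp Require Import ereal numfun.
From mathcomp Require Import lra.
Set Implicit Arguments. Unset Strict Implicit. Unset Printing Implicit Defensive.
Import Order.TTheory GRing.Theory Num.Theory.
Local Open Scope classical_set_scope.
Local Open Scope ring_scope.

Section Coherence.
Variables (R : realType) (Omega : Type).

Local Notation pair := (rvpair R Omega).
Local Notation assessment := (set (pair * \bar R)).
Local Notation term := (pair * R * R)%type.

Definition sup_nonneg (f : Omega -> R) := forall e, 0 < e -> exists w, - e < f w.

Lemma ereal_sup_ge0P (f : Omega -> R) :
  (0 <= ereal_sup (range (fun w => (f w)%:E)))%E <-> sup_nonneg f.
Proof.
split=> [sup_ge0 e e0|fsup].
  have /ereal_sup_gt [_ [w _ <-]] : ((- e)%:E < ereal_sup (range (fun w => (f w)%:E)))%E.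
    by apply: lt_le_trans sup_ge0; rewrite lte_fin oppr_lt0.
  by rewrite lte_fin; exists w.
set x := ereal_sup _.
have x_ge e : 0 < e -> ((- e)%:E <= x)%E.
  move=> e0; have [w fw] := fsup e e0; apply: le_ereal_sup_tmp.
  by exists (f w)%:E; [exists w | rewrite lee_fin ltW].
case: x x_ge => [r| |] x_ge; [|exact: leey|by have := x_ge 1 ltr01].
rewrite lee_fin leNgt; apply/negP => r0.
by have := x_ge (- r / 2) ltac:(lra); rewrite lee_fin; lra.
Qed.

Lemma sup_nonneg_le (f g : Omega -> R) :
  (forall w, f w <= g w) -> sup_nonneg f -> sup_nonneg g.
Proof.
by move=> fg fsup e e0; have [w fw] := fsup e e0; exists w; exact: lt_le_trans (fg w).
Qed.

Lemma sup_nonnegZ (f : Omega -> R) k :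
  0 < k -> sup_nonneg f -> sup_nonneg (fun w => k * f w).
Proof.
move=> k0 fsup e e0; have [w fw] := fsup (e / k) (divr_gt0 e0 k0); exists w.
by move: fw; rewrite -(ltr_pM2l k0) mulrN mulrCA mulfV ?gt_eqF // mulr1.
Qed.

Lemma not_sup_nonneg (f : Omega -> R) :
  ~ sup_nonneg f -> exists2 e, 0 < e & forall w, f w <= - e.
Proof.
move=> /existsNP [e] /not_implyP [e0 /forallNP fe]; exists e => // w.
by have := fe w; rewrite ltNge => /negP; rewrite negbK.
Qed.

Lemma indic_in01 (A : set Omega) w : 0 <= (\1_A w : R) <= 1.
Proof. by rewrite indicE; case: (w \in A); rewrite ?ler01 ?lexx. Qed.

Definition scale_terms (k : R) (s : seq term) :=
  [seq (t.1.1, k * t.1.2, t.2) | t <- s].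

Lemma gamble_nil (w : Omega) : gamble [::] w = 0 :> R.
Proof. by rewrite /gamble big_nil. Qed.

Lemma gamble_cons (t : term) s (w : Omega) :
  gamble (t :: s) w = t.1.2 * \1_(t.1.1.2) w * (t.1.1.1 w - t.2) + gamble s w.
Proof. by rewrite /gamble big_cons. Qed.

Lemma gamble_cat (s1 s2 : seq term) (w : Omega) : gamble (s1 ++ s2) w = gamble s1 w + gamble s2 w :> R.
Proof. by rewrite /gamble big_cat. Qed.

Lemma gamble_scale k (s : seq term) (w : Omega) : gamble (scale_terms k s) w = k * gamble s w.
Proof.
by rewrite /gamble big_map mulr_sumr; apply: eq_bigr => t _ /=; rewrite -!mulrA.
Qed.

Definition admissible_for (G : assessment) (s : seq term) :=
  forall t, t \in s -> exists v, G (t.1.1, v) /\ admissible_term v t.1.2 t.2.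

Definition coherent_rel (G : assessment) :=
  forall s, admissible_for G s -> sup_nonneg (gamble s).

Lemma admissible_for_cons G t s :
  admissible_for G (t :: s) <->
  (exists v, G (t.1.1, v) /\ admissible_term v t.1.2 t.2) /\ admissible_for G s.
Proof.
split=> [Gts|[Gt Gs] u]; last by rewrite in_cons => /orP[/eqP ->|/Gs].
by split=> [|u us]; apply: Gts; rewrite ?mem_head // in_cons us orbT.
Qed.

Lemma admissible_for_cat G s1 s2 :
  admissible_for G s1 -> admissible_for G s2 -> admissible_for G (s1 ++ s2).
Proof. by move=> G1 G2 t; rewrite mem_cat => /orP[/G1|/G2]. Qed.

Lemma admissible_for_scale G k s :
  0 < k -> admissible_for G s -> admissible_for G (scale_terms k s).
Proof.
move=> k0 Gs t /mapP[u /Gs [v [Gv uv]] ->] /=; exists v; split => //.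
by case: v uv {Gv} => [r| |] //= ?; [exact: mulr_ge0 (ltW k0) _|rewrite pmulr_rle0].
Qed.

Lemma admissible_for_sub G H s : G `<=` H -> admissible_for G s -> admissible_for H s.
Proof. by move=> GH Gs t /Gs [v [Gv tv]]; exists v; split => //; exact: GH. Qed.

Lemma coherent_rel_sub G H : G `<=` H -> coherent_rel H -> coherent_rel G.
Proof. by move=> GH Hcoh s /(admissible_for_sub GH) /Hcoh. Qed.

Definition compatible (G : assessment) (p : pair) (a C : R) :=
  forall s, admissible_for G s ->
    sup_nonneg (fun w => gamble s w + \1_(p.2) w * (a * p.1 w - C)).

Lemma compatible0 G p : coherent_rel G -> compatible G p 0 0.
Proof. by move=> Gcoh s /Gcoh; apply: sup_nonneg_le => w; rewrite mul0r subr0 mulr0 addr0. Qed.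

Lemma compatibleZ G p a C k :
  0 < k -> compatible G p a C -> compatible G p (k * a) (k * C).
Proof.
move=> k0 pc s; have kV0 : 0 < k^-1 by rewrite invr_gt0.
move=> /(admissible_for_scale kV0) /pc /(sup_nonnegZ k0).
apply: sup_nonneg_le => w; rewrite gamble_scale mulrDr mulrA mulfV ?gt_eqF // mul1r.
by rewrite mulrCA mulrBr mulrA.
Qed.

Lemma compatible_approx G p a C :
  (forall e, 0 < e -> compatible G p a (C - e)) -> compatible G p a C.
Proof.
move=> pc s Gs e e0; have [w lt_w] := pc (e / 2) ltac:(lra) s Gs (e / 2) ltac:(lra).
exists w; move: lt_w; have /andP[i0 i1] := indic_in01 p.2 w.
set i := \1_ _ w; nra.
Qed.

Lemma compatible_sandwich G p r u :
  coherent_rel G -> ~ compatible G p 1 r -> ~ compatible G p (-1) (- u) -> u < r.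
Proof.
move=> Gcoh /existsNP [s1 /not_implyP [G1 /not_sup_nonneg [e1 e10 le1]]].
move=> /existsNP [s2 /not_implyP [G2 /not_sup_nonneg [e2 e20 le2]]].
rewrite ltNge; apply/negP => ru.
have [w] := Gcoh _ (admissible_for_cat G1 G2) (e1 + e2) (addr_gt0 e10 e20).
rewrite gamble_cat; apply/negP; rewrite -leNgt.
have := le1 w; have := le2 w; have /andP[i0 i1] := indic_in01 p.2 w.
set i := \1_ _ w => le2w le1w.
have : 0 <= i * (u - r) by apply: mulr_ge0; lra.
nra.
Qed.

(* [(a, C)] ranges over the sums of [(alpha, alpha * c)] for terms [(alpha, c)] admissible
   for the value [v]: these are the gambles [B(aX - C)] that the value [v] commits to. *)
Definition admissible_sum (v : \bar R) (a C : R) : Prop :=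
  match v with
  | r%:E => C = a * r
  | +oo%E => 0 <= a /\ (a = 0 -> C = 0)
  | -oo%E => a <= 0 /\ (a = 0 -> C = 0)
  end.

Lemma admissible_sum0 v : admissible_sum v 0 0.
Proof. by case: v => [r| |] //=; rewrite mul0r. Qed.

Lemma admissible_sum_cons v alpha c a C :
  admissible_term v alpha c -> admissible_sum v a C ->
  admissible_sum v (alpha + a) (alpha * c + C).
Proof.
case: v => [r| |] /=; first by move=> -> ->; rewrite mulrDl.
all: move=> alpha_sgn [a_sgn aC]; split=> [|sum0]; first lra.
all: have alpha0 : alpha = 0 by lra.
all: by rewrite alpha0 mul0r add0r aC //; lra.
Qed.

Lemma admissible_for_extend G p v s :
  admissible_for (G `|` [set (p, v)]) s ->
  exists s1 a C, [/\ admissible_for G s1, admissible_sum v a C &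
    forall w, gamble s w = gamble s1 w + \1_(p.2) w * (a * p.1 w - C)].
Proof.
elim: s => [_|t s IH /admissible_for_cons [[u [Gu tu]] /IH]].
  exists [::], 0, 0; split => [t //| |w]; first exact: admissible_sum0.
  by rewrite !gamble_nil mul0r subr0 mulr0 addr0.
move=> [s1 [a [C [Gs1 vaC gs]]]].
case: Gu => [Gu|[tp uv]].
  exists (t :: s1), a, C; split => // [|w].
    by apply/admissible_for_cons; split => //; exists u.
  by rewrite !gamble_cons gs addrA.
exists s1, (t.1.2 + a), (t.1.2 * t.2 + C); split => // [|w].
  by apply: admissible_sum_cons; rewrite // -uv.
by rewrite gamble_cons gs tp; lra.
Qed.

Lemma coherent_rel_extend G p v :
  (forall a C, admissible_sum v a C -> compatible G p a C) ->
  coherent_rel (G `|` [set (p, v)]).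
Proof.
move=> vc s /admissible_for_extend [s1 [a [C [Gs1 vaC gs]]]].
by have := vc _ _ vaC s1 Gs1; apply: sup_nonneg_le => w; rewrite gs.
Qed.

Lemma compatible_threshold G p :
  coherent_rel G -> ~ (forall r, compatible G p 1 r) ->
  ~ (forall r, compatible G p (-1) (- r)) ->
  exists t, compatible G p 1 t /\ compatible G p (-1) (- t).
Proof.
move=> Gcoh /existsNP [r0 nr0] /existsNP [u0 nu0].
pose E := [set r | ~ compatible G p 1 r].
have E_lb : has_lbound E.
  by exists u0 => r Er; exact/ltW/(compatible_sandwich Gcoh Er nu0).
have E_nonempty : E !=set0 by exists r0.
exists (inf E); split; apply: compatible_approx => e e0.
- by apply: contrapT => nE; have := ge_inf E_lb nE; lra.
- apply: contrapT; rewrite -opprD => nE.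
  have : lbound E (inf E + e) by move=> r Er; exact/ltW/(compatible_sandwich Gcoh Er nE).
  by move=> /(lb_le_inf E_nonempty); lra.
Qed.

Lemma coherent_rel_extend_exists G p :
  coherent_rel G -> exists v, coherent_rel (G `|` [set (p, v)]).
Proof.
move=> Gcoh.
have pos_ok r a : compatible G p 1 r -> 0 < a -> compatible G p a (a * r).
  by move=> pr a0; have := compatibleZ a0 pr; rewrite mulr1.
have neg_ok r a : compatible G p (-1) (- r) -> a < 0 -> compatible G p a (a * r).
  move=> pr a0; have := compatibleZ (k := - a) _ pr.
  by rewrite mulrN1 opprK mulrN mulNr opprK oppr_gt0; apply.
have [all_neg|not_neg] := pselect (forall r, compatible G p (-1) (- r)).
  exists -oo%E; apply: coherent_rel_extend => a C /= [a_sgn aC].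
  have [a0|a_neq0] := eqVneq a 0; first by rewrite a0 aC //; exact: compatible0.
  by rewrite -(divfK a_neq0 C) mulrC; apply: neg_ok; rewrite // lt_neqAle a_neq0 a_sgn.
have [all_pos|not_pos] := pselect (forall r, compatible G p 1 r).
  exists +oo%E; apply: coherent_rel_extend => a C /= [a_sgn aC].
  have [a0|a_neq0] := eqVneq a 0; first by rewrite a0 aC //; exact: compatible0.
  by rewrite -(divfK a_neq0 C) mulrC; apply: pos_ok; rewrite // lt_neqAle eq_sym a_neq0 a_sgn.
have [t [pt nt]] := compatible_threshold Gcoh not_pos not_neg.
exists t%:E; apply: coherent_rel_extend => a C /= ->.
have [a0|a0|->] := ltgtP a 0; [exact: neg_ok|exact: pos_ok|].
by rewrite mul0r; exact: compatible0.
Qed.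

Lemma admissible_for_chain (Fc : set assessment) X0 s :
  total_on Fc subset -> Fc X0 ->
  admissible_for (\bigcup_(X in Fc) X) s -> exists2 X, Fc X & admissible_for X s.
Proof.
move=> Fc_total FcX0; elim: s => [_|t s IH /admissible_for_cons [[v [[Y FcY Yv] tv]]]].
  by exists X0 => // t.
move=> /IH [X FcX Xs].
have [XY|YX] := Fc_total _ _ FcX FcY.
  exists Y => //; apply/admissible_for_cons; split; first by exists v.
  exact: admissible_for_sub XY Xs.
by exists X => //; apply/admissible_for_cons; split => //; exists v; split => //; exact: YX.
Qed.

Lemma coherent_rel_chain (Fc : set assessment) X0 :
  total_on Fc subset -> Fc X0 -> (forall X, Fc X -> coherent_rel X) ->
  coherent_rel (\bigcup_(X in Fc) X).
Proof.
move=> Fc_total FcX0 Fc_coh s /(admissible_for_chain Fc_total FcX0) [X FcX Xs].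
exact: Fc_coh Xs.
Qed.

Lemma coherent_rel_total G0 :
  coherent_rel G0 -> exists M, [/\ G0 `<=` M, coherent_rel M & forall p, exists v, M (p, v)].
Proof.
move=> G0coh.
have chain_ub Fc : Fc `<=` (fun X => coherent_rel (X `|` G0)) -> total_on Fc subset ->
    coherent_rel ((\bigcup_(X in Fc) X) `|` G0).
  move=> Fc_coh Fc_total; pose Fc' := G0 |` [set X `|` G0 | X in Fc].
  have Fc'_total : total_on Fc' subset.
    move=> _ _ [->|[X FcX <-]] [->|[Y FcY <-]];
      try by [left|left; exact: subsetUr|right; exact: subsetUr].
    by have [XY|YX] := Fc_total _ _ FcX FcY; [left|right]; exact: setSU.
  apply: coherent_rel_sub (coherent_rel_chain (X0 := G0) Fc'_total (or_introl erefl) _).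
    move=> q [[X FcX Xq]|G0q]; first by exists (X `|` G0); [right; exists X|left].
    by exists G0; [left|].
  by move=> _ [->|[X FcX <-]] //; exact: Fc_coh.
have [A [Acoh Amax]] := Zorn_bigcup chain_ub.
exists (A `|` G0); split => [|//|p]; first exact: subsetUr.
have [v Avcoh] := coherent_rel_extend_exists p Acoh.
exists v; left; apply: contrapT => nAv; apply: (Amax (A `|` [set (p, v)])).
  split; first exact: subsetUl.
  by move=> /(_ (p, v) (or_intror erefl)).
by apply: coherent_rel_sub Avcoh => q [[Aq|->]|G0q]; [left; left|right|left; right].
Qed.

End Coherence.

Lemma coherent1_sub (R : realType) (Omega : Type) (S T : set (rvpair R Omega)) P :
  S `<=` T -> coherent1 T P -> coherent1 S P.
Proof. by move=> ST Tcoh s Ss; apply: Tcoh => t /Ss [/ST St tP]. Qed.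

Lemma coherent1_extension (R : realType) (Omega : Type) (D : set (rvpair R Omega)) P :
  coherent1 D P ->
  exists P', (forall p, D p -> P' p = P p) /\ coherent1 setT P'.
Proof.
move=> Dcoh; pose G0 := [set q | D q.1 /\ q.2 = P q.1].
have G0coh : coherent_rel G0.
  move=> s G0s; apply/ereal_sup_ge0P/Dcoh => t /G0s [_ [[/= Dt ->] tP]]; by split.
have [M [G0M Mcoh Mtotal]] := coherent_rel_total G0coh.
pose P' p := if `[< D p >] then P p else xget 0%E [set v | M (p, v)].
have MP' p : M (p, P' p).
  rewrite /P'; case: asboolP => [Dp|_]; first exact: G0M.
  exact: (@xgetPex _ 0%E [set v | M (p, v)] (Mtotal p)).
exists P'; split => [p Dp|s Ps]; first by rewrite /P' asboolT.
by apply/ereal_sup_ge0P/Mcoh => t /Ps [_ tP]; exists (P' t.1.1).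
Qed.

Theorem theorem7p1 (R : realType) (Omega : Type)
    (D F : set (rvpair R Omega)) (P : rvpair R Omega -> \bar R) :
  (forall p, D p -> p.2 !=set0) ->
  coherent1 D P ->
  (forall c : R, D (cst c, setT)) ->
  (forall p, F p -> p.2 !=set0) ->
  D `<=` F ->
  exists P' : rvpair R Omega -> \bar R,
    (forall p, D p -> P' p = P p) /\ coherent1 F P'.
Proof.
move=> _ Dcoh _ _ _.
have [P' [P'P P'coh]] := coherent1_extension Dcoh.
by exists P'; split => //; exact: coherent1_sub P'coh.
Qed.
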